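(* Let $T$ be an $n\times n$ complex matrix with distinct eigenvalues $\lambda_1,\dots,\lambda_n$. Let $u_1,\dots,u_n$ be unit eigenvectors of $T$ with $Tu_i=\lambda_iu_i$, and let $v_1,\dots,v_n$ be unit eigenvectors of $T^*$ with $T^*v_i=\overline{\lambda_i}v_i$. If $T$ is unitarily equivalent to a complex symmetric matrix, then $|\langle u_i,u_j\rangle|=|\langle v_i,v_j\rangle|$ for all $1\le i<j\le n$.
   Context: A complex symmetric matrix is a square complex matrix $S$ with $S=S^t$ (transpose). Two matrices $A,B\in M_n(\mathbb{C})$ are unitarily equivalent if $A=U^*BU$ for some unitary $U$. $\langle\cdot,\cdot\rangle$ is the standard inner product on $\mathbb{C}^n$. *)

From mathcomp Require Import all_boot all_algebra.
From mathcomp Require Import complex reals.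
Set Implicit Arguments. Unset Strict Implicit. Unset Printing Implicit Defensive.
Import GRing.Theory Num.Theory.
Local Open Scope ring_scope.
Local Open Scope complex_scope.

Definition adjmx (R : realType) (m n : nat) (A : 'M[R[i]]_(m, n)) : 'M[R[i]]_(n, m) :=
  (map_mx (fun z : R[i] => z^*) A)^T.

Definition cdot (R : realType) (n : nat) (x y : 'cV[R[i]]_n) : R[i] :=
  \sum_(k < n) x k ord0 * (y k ord0)^*.

Definition unitary_mx (R : realType) (n : nat) (U : 'M[R[i]]_n) : Prop :=
  adjmx U *m U = 1%:M.

Definition unitarily_equivalent (R : realType) (n : nat) (A B : 'M[R[i]]_n) : Prop :=
  exists U : 'M[R[i]]_n, unitary_mx U /\ A = adjmx U *m B *m U.

Definition complex_symmetric (R : realType) (n : nat) (S : 'M[R[i]]_n) : Prop :=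
  S^T = S.

Definition unit_vec (R : realType) (n : nat) (x : 'cV[R[i]]_n) : Prop :=
  cdot x x = 1.

From mathcomp Require Import all_boot all_algebra.
From mathcomp Require Import complex reals zify.
Set Implicit Arguments. Unset Strict Implicit. Unset Printing Implicit Defensive.
Import GRing.Theory Num.Theory.
Local Open Scope ring_scope.
Local Open Scope complex_scope.

(* Write T = U^* S U with S symmetric and let J x := U^* conj(U x).  J is a
   conjugate-linear involution with <J x, J y> = <y, x>, and the symmetry of S
   gives T J = J T^*.  Hence J v_k is an eigenvector of T for lambda_k; as the
   n eigenvalues are distinct, every eigenspace of T is a line, so
   J v_k = c_k u_k with |c_k| = 1.  Then
   <v_i, v_j> = <J v_j, J v_i> = c_j conj(c_i) <u_j, u_i>, and taking moduli
   gives the claim (for all i, j, not only i < j). *)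

Lemma eigenspace_rank_full_spectrum (F : fieldType) (n : nat) (g : 'M[F]_n)
    (a : 'I_n -> F) :
  injective a -> (forall i, eigenvalue g (a i)) ->
  forall i, \rank (eigenspace g (a i)) = 1%N.
Proof.
move=> inj_a eig_a i.
have /mxdirectP/= rank_sum := mxdirect_sum_eigenspace g (P := predT) (in2W inj_a).
have rank_gt0 j : (0 < \rank (eigenspace g (a j)))%N.
  by rewrite lt0n mxrank_eq0; apply: eig_a.
have : (\sum_(j < n) \rank (eigenspace g (a j)) <= n)%N.
  by rewrite -rank_sum rank_leq_col.
rewrite (bigD1 i) //=; set s := \sum_(j < n | _) _ => rank_le.
have others : (n.-1 <= s)%N.
  rewrite -[n in n.-1]card_ord -(cardC1 i) -sum1_card; exact: leq_sum.
have := rank_gt0 i; have := ltn_ord i; lia.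
Qed.

Lemma eigenvector_full_spectrum_unique (F : fieldType) (n : nat) (g : 'M[F]_n)
    (a : 'I_n -> F) (w : 'I_n -> 'cV[F]_n) :
  injective a -> (forall i, w i != 0) -> (forall i, g *m w i = a i *: w i) ->
  forall i x, g *m x = a i *: x -> exists c, x = c *: w i.
Proof.
move=> inj_a w_neq0 w_eig i x x_eig.
have row_eig (y : 'cV_n) l : g *m y = l *: y -> (y^T <= eigenspace g^T l)%MS.
  by move=> y_eig; apply/eigenspaceP; rewrite -trmx_mul y_eig linearZ.
have eig_a j : eigenvalue g^T (a j).
  by apply/eigenvalueP; exists (w j)^T; rewrite ?trmx_eq0 -?trmx_mul ?w_eig ?linearZ.
have rank_w : \rank (w i)^T = 1%N.
  by apply/eqP; rewrite eqn_leq rank_leq_row lt0n mxrank_eq0 trmx_eq0 w_neq0.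
have /mxrank_leqif_eq[_] := row_eig _ _ (w_eig i).
rewrite rank_w eigenspace_rank_full_spectrum // eqxx => /esym/andP[_ sub_w].
have /submxP[d x_d] := submx_trans (row_eig _ _ x_eig) sub_w.
exists (d 0 0); apply: trmx_inj.
by rewrite x_d linearZ /= {1}[d]mx11_scalar mul_scalar_mx.
Qed.

Section InnerProduct.
Variable R : realType.
Local Notation C := R[i].
Local Notation conj_mx A := (map_mx (@conjc R) A).

Lemma adjmxM m n p (A : 'M[C]_(m, n)) (B : 'M[C]_(n, p)) :
  adjmx (A *m B) = adjmx B *m adjmx A.
Proof. by rewrite /adjmx map_mxM trmx_mul. Qed.

Lemma adjmxK m n (A : 'M[C]_(m, n)) : adjmx (adjmx A) = A.
Proof. by apply/matrixP => i j; rewrite !mxE conjcK. Qed.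

Lemma conj_adjmx m n (A : 'M[C]_(m, n)) : conj_mx (adjmx A) = A^T.
Proof. by apply/matrixP => i j; rewrite !mxE conjcK. Qed.

(* [cdot] is stated with the generic [Num.conj] of the closed field [R[i]];
   this unfolds it with [conjc], the conjugation [adjmx] and the scalars use. *)
Lemma cdot_conjcE n (x y : 'cV[C]_n) :
  cdot x y = \sum_(k < n) x k 0 * conjc (y k 0).
Proof. by []. Qed.

Lemma cdotE n (x y : 'cV[C]_n) : cdot x y = (adjmx y *m x) 0 0.
Proof. by rewrite cdot_conjcE mxE; apply: eq_bigr => k _; rewrite !mxE mulrC. Qed.

Lemma cdotC n (x y : 'cV[C]_n) : cdot y x = conjc (cdot x y).
Proof.
rewrite !cdot_conjcE rmorph_sum; apply: eq_bigr => k _.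
by rewrite rmorphM /= conjcK mulrC.
Qed.

Lemma cdotZ n a b (x y : 'cV[C]_n) :
  cdot (a *: x) (b *: y) = a * conjc b * cdot x y.
Proof.
rewrite !cdot_conjcE mulr_sumr; apply: eq_bigr => k _.
by rewrite !mxE rmorphM mulrACA.
Qed.

Lemma unit_vec_neq0 n (x : 'cV[C]_n) : unit_vec x -> x != 0.
Proof.
move=> x_unit; apply/eqP => x0; move: x_unit.
rewrite /unit_vec x0 cdot_conjcE big1 => [/esym/eqP|k _]; first by rewrite oner_eq0.
by rewrite mxE mul0r.
Qed.

Lemma unit_vec_scale_norm1 n (c : C) (x : 'cV[C]_n) :
  unit_vec x -> unit_vec (c *: x) -> `|c| = 1.
Proof.
rewrite /unit_vec cdotZ => -> /eqP; rewrite mulr1 -sqr_normc sqrf_eq1.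
by case/orP=> /eqP // c_N1; have := normr_ge0 c; rewrite c_N1 ler0N1.
Qed.

Lemma cdot_isometry m n (A : 'M[C]_(m, n)) (x y : 'cV_n) :
  adjmx A *m A = 1%:M -> cdot (A *m x) (A *m y) = cdot x y.
Proof.
by move=> A_iso; rewrite !cdotE adjmxM -mulmxA (mulmxA (adjmx A)) A_iso mul1mx.
Qed.

Lemma cdot_conj_mx n (x y : 'cV[C]_n) : cdot (conj_mx x) (conj_mx y) = cdot y x.
Proof. by rewrite !cdot_conjcE; apply: eq_bigr => k _; rewrite !mxE conjcK mulrC. Qed.

End InnerProduct.

Section UnitaryConjugation.
Variables (R : realType) (n : nat) (U : 'M[R[i]]_n).
Hypothesis U_unitary : unitary_mx U.
Local Notation conj_mx A := (map_mx (@conjc R) A).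

Definition unitary_conj (x : 'cV[R[i]]_n) : 'cV_n := adjmx U *m conj_mx (U *m x).

Let U_coisometry : U *m adjmx U = 1%:M := mulmx1C U_unitary.

Lemma cdot_unitary_conj x y : cdot (unitary_conj x) (unitary_conj y) = cdot y x.
Proof. by rewrite cdot_isometry ?adjmxK // cdot_conj_mx cdot_isometry. Qed.

Lemma unitary_conjZ a x : unitary_conj (a *: x) = conjc a *: unitary_conj x.
Proof. by rewrite /unitary_conj -scalemxAr map_mxZ scalemxAr. Qed.

Lemma unitary_conj_intertwines (S T : 'M[R[i]]_n) x :
  S^T = S -> T = adjmx U *m S *m U ->
  T *m unitary_conj x = unitary_conj (adjmx T *m x).
Proof.
move=> S_sym T_def.
have U_adjT : U *m adjmx T = adjmx S *m U.
  by rewrite T_def !adjmxM adjmxK !mulmxA U_coisometry mul1mx.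
rewrite /unitary_conj (mulmxA U) U_adjT T_def -!mulmxA (mulmxA U) U_coisometry mul1mx.
by rewrite [in RHS]map_mxM /= conj_adjmx S_sym.
Qed.

End UnitaryConjugation.

Theorem theorem1 (R : realType) (n : nat) (T : 'M[R[i]]_n)
  (lam : 'I_n -> R[i]) (u v : 'I_n -> 'cV[R[i]]_n) :
  injective lam ->
  (forall i, unit_vec (u i) /\ T *m u i = lam i *: u i) ->
  (forall i, unit_vec (v i) /\ adjmx T *m v i = (lam i)^* *: v i) ->
  (exists S : 'M[R[i]]_n, complex_symmetric S /\ unitarily_equivalent T S) ->
  forall i j : 'I_n, (i < j)%N -> `|cdot (u i) (u j)| = `|cdot (v i) (v j)|.
Proof.
move=> inj_lam u_eig v_eig [S [S_sym [U [U_unitary T_def]]]] i j _.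
pose J := unitary_conj U.
have Jv_eig k : T *m J (v k) = lam k *: J (v k).
  rewrite (unitary_conj_intertwines U_unitary _ S_sym T_def) (v_eig k).2.
  by rewrite unitary_conjZ conjcK.
have Jv_unit k : exists2 c, J (v k) = c *: u k & `|c| = 1.
  have [c Jv_c] := eigenvector_full_spectrum_unique inj_lam
    (fun k => unit_vec_neq0 (u_eig k).1) (fun k => (u_eig k).2) (Jv_eig k).
  exists c => //; apply: (unit_vec_scale_norm1 (u_eig k).1).
  by rewrite -Jv_c /unit_vec cdot_unitary_conj //; exact: (v_eig k).1.
have [[ci Jvi ci1] [cj Jvj cj1]] := (Jv_unit i, Jv_unit j).
rewrite -(cdot_unitary_conj U_unitary (v j)) -/J Jvi Jvj cdotZ cdotC.
by rewrite !normrM !normcJ ci1 cj1 !mul1r.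
Qed.
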